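(* For every cartesian cubical set $X$ and every $n\ge 0$, \[ (X_{\mathrm{I}})_n\ \cong\ X_n\times X_{n-1}^{\binom{n}{n-1}}\times\dots\times X_1^{\binom{n}{1}}\times X_0, \] where $X_k^{m}$ denotes the $m$-fold product of the set $X_k$, and $X_{\mathrm{I}}$ is the value at $X$ of the right adjoint to the path object functor $Y\mapsto Y^{\mathrm{I}}$.
   Context: Let $\mathbb{B}$ be the category of finite sets $[n]=\{\bot,x_1,\dots,x_n,\top\}$ ($n\ge0$, $\bot\ne\top$) and functions preserving $\bot,\top$; the cartesian cube category is $\mathbb{C}_\times=\mathbb{B}^{op}$, and cartesian cubical sets are presheaves on $\mathbb{C}_\times$. For a cubical set $X$, $X_k=X([k])$. $\mathrm{I}$ is the representable presheaf on $[1]$ and $Y^{\mathrm{I}}$ is the exponential; the functor $Y\mapsto Y^{\mathrm{I}}$ has a right adjoint, whose value at $X$ is written $X_{\mathrm{I}}$. *)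

From Stdlib Require Import FunctionalExtensionality ProofIrrelevance.
From mathcomp Require Import all_boot.
Set Implicit Arguments. Unset Strict Implicit. Unset Printing Implicit Defensive.

(* The object [n] = {bot, x_1, ..., x_n, top} is represented by 'I_n.+2,
   with bot = ord0 and top = ord_max (so x_i = i). *)
Definition bmap_ok m n (f : {ffun 'I_m.+2 -> 'I_n.+2}) : bool :=
  (f ord0 == ord0) && (f ord_max == ord_max).

Record bmap (m n : nat) := BMap { bfun :> {ffun 'I_m.+2 -> 'I_n.+2};
                                  bfunP : bmap_ok bfun }.

Lemma bmap_eq m n (f g : bmap m n) : (forall i, f i = g i) -> f = g.
Proof.
case: f => f fP; case: g => g gP /= H.
have E : f = g by apply/ffunP.
subst g; by rewrite (eq_irrelevance fP gP).
Qed.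

Lemma bid_ok n : bmap_ok [ffun i : 'I_n.+2 => i].
Proof. by rewrite /bmap_ok !ffunE !eqxx. Qed.
Definition bid n : bmap n n := BMap (bid_ok n).

Lemma bcomp_ok m n p (g : bmap n p) (f : bmap m n) :
  bmap_ok [ffun i => g (f i)].
Proof.
have := bfunP f; have := bfunP g.
rewrite /bmap_ok => /andP [/eqP g0 /eqP g1] /andP [/eqP f0 /eqP f1].
by rewrite !ffunE /= f0 f1 g0 g1 !eqxx.
Qed.
Definition bcomp m n p (g : bmap n p) (f : bmap m n) : bmap m p :=
  BMap (bcomp_ok g f).

Lemma bcompA m n p q (h : bmap p q) (g : bmap n p) (f : bmap m n) :
  bcomp h (bcomp g f) = bcomp (bcomp h g) f.
Proof. by apply: bmap_eq => i; rewrite /= !ffunE. Qed.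

(* A presheaf on C_x = B^op is a covariant functor B -> Type; X_k = X([k]).
   [pset] is the underlying data (graded types + action), [cset] adds the
   functor laws. *)
Record pset := PSet { pobj : nat -> Type;
                      pact : forall m n, bmap m n -> pobj m -> pobj n }.
Arguments pact p {m n} _ _.

Definition is_cset (X : pset) : Prop :=
  (forall n (x : pobj X n), pact X (bid n) x = x) /\
  (forall m n p (f : bmap m n) (g : bmap n p) (x : pobj X m),
      pact X (bcomp g f) x = pact X g (pact X f x)).

Record cset := CSet { cpset :> pset; csetP : is_cset cpset }.

Local Unset Implicit Arguments.
Record hom (X Y : pset) := Hom {
  hfun :> forall n, pobj X n -> pobj Y n;
  hnat : forall m n (f : bmap m n) (x : pobj X m),
           hfun n (pact X f x) = pact Y f (hfun m x) }.
Local Set Implicit Arguments.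
Arguments hfun {X Y} h n x.
Arguments hnat {X Y} h {m n} f x.

Lemma hom_eq (X Y : pset) (a b : hom X Y) :
  (forall n x, hfun a n x = hfun b n x) -> a = b.
Proof.
case: a => a an; case: b => b bn /= H.
have E : a = b.
  apply: functional_extensionality_dep => n.
  by apply: functional_extensionality => x.
subst b; by rewrite (proof_irrelevance _ an bn).
Qed.

Lemma hom_comp_nat (X Y Z : pset) (g : hom Y Z) (h : hom X Y) m n
  (f : bmap m n) (x : pobj X m) :
  hfun g n (hfun h n (pact X f x)) = pact Z f (hfun g m (hfun h m x)).
Proof. by rewrite (hnat h) (hnat g). Qed.
Definition hom_comp (X Y Z : pset) (g : hom Y Z) (h : hom X Y) : hom X Z :=
  @Hom X Z (fun n x => hfun g n (hfun h n x)) (hom_comp_nat g h).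

(* representable presheaf y[n] : (y[n])_k = Hom_C([k],[n]) = Hom_B([n],[k]) *)
Definition yon (n : nat) : pset :=
  @PSet (fun k => bmap n k) (fun k l (f : bmap k l) (g : bmap n k) => bcomp f g).

Definition Int : pset := yon 1.

Definition pprod (X Y : pset) : pset :=
  @PSet (fun n => (pobj X n * pobj Y n)%type)
        (fun m n f xy => (pact X f xy.1, pact Y f xy.2)).

Section Exp.
Variable Y : pset.

Definition pexp_obj n := hom (pprod (yon n) Int) Y.

Lemma precomp_nat m n (f : bmap m n) (a : pexp_obj m) k l (h : bmap k l)
  (x : pobj (pprod (yon n) Int) k) :
  hfun a l (bcomp (bcomp h x.1) f, bcomp h x.2)
  = pact Y h (hfun a k (bcomp x.1 f, x.2)).
Proof.
rewrite -bcompA.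
exact: (hnat a h (bcomp x.1 f, x.2)).
Qed.

Definition pexp_act m n (f : bmap m n) (a : pexp_obj m) : pexp_obj n :=
  @Hom (pprod (yon n) Int) Y
       (fun k x => hfun a k (bcomp x.1 f, x.2)) (precomp_nat f a).
End Exp.

Definition pexp (Y : pset) : pset := @PSet (pexp_obj Y) (@pexp_act Y).

Lemma expmap_nat (Y Y' : pset) (g : hom Y Y') m n (f : bmap m n)
  (a : pobj (pexp Y) m) :
  hom_comp g (pexp_act f a) = pexp_act f (hom_comp g a).
Proof. by apply: hom_eq. Qed.

Definition expmap (Y Y' : pset) (g : hom Y Y') : hom (pexp Y) (pexp Y') :=
  @Hom (pexp Y) (pexp Y') (fun n a => hom_comp g a) (expmap_nat g).

(* P is the value at X of a right adjoint to (-)^I: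
   a bijection Hom(Y^I, X) ~ Hom(Y, P), natural in the cubical set Y. *)
Definition right_adjoint_value (X P : cset) : Type :=
  { phi : forall Y : cset, hom (pexp Y) X -> hom Y P |
    (forall Y : cset, bijective (phi Y)) /\
    (forall (Y Y' : cset) (g : hom Y' Y) (a : hom (pexp Y) X),
        phi Y' (hom_comp a (expmap g)) = hom_comp (phi Y a) g) }.

(* By the adjunction and the Yoneda lemma, (X_I)_n is in bijection with the
   maps y[n]^I -> X.  Since [m+1] is the coproduct of [m] and [1] in B, we have
   y[m] x I = y[m+1], so y[n]^I sends [m] to B([n],[m+1]).  A map g in
   B([n],[m+1]) is determined by the set S of variables that g does not send
   to the new point x_(m+1), together with the induced map [|S|] -> [m]; and
   g is then the image of a single generic map [n] -> [|S|+1] under that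
   induced map.  Hence y[n]^I is the coproduct of the y[|S|] over all subsets
   S of {x_1, ..., x_n}, maps y[n]^I -> X are families indexed by S with
   values in X_|S|, and grouping the subsets by cardinality gives the formula. *)

From mathcomp Require Import all_boot.
From Stdlib Require Import FunctionalExtensionality ProofIrrelevance.
Set Implicit Arguments. Unset Strict Implicit. Unset Printing Implicit Defensive.

Lemma reindex_bij (A B : Type) (e : A -> B) (P : B -> Type) :
  bijective e -> bijective (fun (d : forall b, P b) a => d (e a)).
Proof.
case=> e' eK e'K.
exists (fun c b => eq_rect _ P (c (e' b)) b (e'K b)) => [d|c].
- apply: functional_extensionality_dep => b /=.
  by move: (e'K b); move: (e (e' b)) => b' E; case: b / E.
- apply: functional_extensionality_dep => a /=.
  move: (e'K (e a)); rewrite eK => E.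
  by rewrite (proof_irrelevance _ E erefl).
Qed.

Lemma curry_bij (I : Type) (T_ : I -> Type) (P : I -> Type) :
  bijective (fun (d : forall w : {i : I & T_ i}, P (tag w)) i x => d (existT _ i x)).
Proof.
exists (fun (c : forall i, T_ i -> P i) w => c (tag w) (tagged w)) => [d|c] //.
by apply: functional_extensionality_dep => -[].
Qed.

(* The variable x_(i+1) of [m], for i : 'I_m. *)
Definition bvar m (i : 'I_m) : 'I_m.+2 := lift ord0 (lift ord_max i).

Variant bpoint_spec m : 'I_m.+2 -> Type :=
  | BPointBot : bpoint_spec ord0
  | BPointTop : bpoint_spec ord_max
  | BPointVar i : bpoint_spec (bvar i).

Lemma bpointP m (p : 'I_m.+2) : bpoint_spec p.
Proof.
case: (unliftP ord0 p) => [q ->|->]; last exact: BPointBot.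
case: (unliftP ord_max q) => [i ->|->]; first exact: BPointVar.
have -> : lift ord0 (@ord_max m) = ord_max by apply: val_inj.
exact: BPointTop.
Qed.

Lemma bvar_inj m : injective (@bvar m).
Proof. by move=> i j /lift_inj /lift_inj. Qed.

Lemma bmap_bot m k (f : bmap m k) : f ord0 = ord0.
Proof. by case/andP: (bfunP f) => /eqP. Qed.

Lemma bmap_top m k (f : bmap m k) : f ord_max = ord_max.
Proof. by case/andP: (bfunP f) => _ /eqP. Qed.

Lemma bmap_var_eq m k (f g : bmap m k) :
  (forall i, f (bvar i) = g (bvar i)) -> f = g.
Proof.
move=> fg; apply: bmap_eq => p.
by case: (bpointP p) => [||i]; rewrite ?bmap_bot ?bmap_top.
Qed.

Definition bmap_of_fun m k (h : 'I_m -> 'I_k.+2) : {ffun 'I_m.+2 -> 'I_k.+2} :=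
  [ffun p => if unlift ord0 p is Some q then
               if unlift ord_max q is Some i then h i else ord_max
             else ord0].

Lemma bmap_of_ok m k (h : 'I_m -> 'I_k.+2) : bmap_ok (bmap_of_fun h).
Proof.
have top_lift : @ord_max m.+1 = lift ord0 ord_max by apply: val_inj.
by rewrite /bmap_ok !ffunE unlift_none {1}top_lift liftK unlift_none !eqxx.
Qed.

Definition bmap_of m k (h : 'I_m -> 'I_k.+2) : bmap m k := BMap (bmap_of_ok h).

Lemma bmap_ofE m k (h : 'I_m -> 'I_k.+2) i : bmap_of h (bvar i) = h i.
Proof. by rewrite ffunE !liftK. Qed.

Lemma bcompE m k l (g : bmap k l) (f : bmap m k) p : bcomp g f p = g (f p).
Proof. by rewrite ffunE. Qed.

Lemma bidE m p : bid m p = p.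
Proof. by rewrite ffunE. Qed.

Lemma bcomp_idl m k (f : bmap m k) : bcomp (bid k) f = f.
Proof. by apply: bmap_eq => p; rewrite bcompE bidE. Qed.

Lemma bcomp_idr m k (f : bmap m k) : bcomp f (bid m) = f.
Proof. by apply: bmap_eq => p; rewrite bcompE bidE. Qed.

Lemma yon_cset n : is_cset (yon n).
Proof. by split=> [k g|m k l f g x] /=; rewrite ?bcomp_idl ?bcompA. Qed.

Definition yon_cs n : cset := CSet (yon_cset n).

Section Yoneda.
Variables (P : cset) (n : nat).

Lemma yoneda_hom_nat (x : pobj P n) k l (f : bmap k l) (g : pobj (yon n) k) :
  pact P (bcomp f g) x = pact P f (pact P g x).
Proof. exact: (csetP P).2. Qed.

Definition yoneda_hom (x : pobj P n) : hom (yon n) P :=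
  @Hom (yon n) P (fun k g => pact P g x) (yoneda_hom_nat x).

Lemma yoneda_hom_bij : bijective yoneda_hom.
Proof.
exists (fun h : hom (yon n) P => hfun h n (bid n)) => [x|h].
  exact: (csetP P).1.
apply: hom_eq => k g /=.
by rewrite -[in RHS](bcomp_idr g) (hnat h g (bid n)).
Qed.

End Yoneda.

(* The point contributed by [1] to the coproduct [m+1] = [m] + [1]. *)
Definition bnew m : 'I_m.+3 := bvar ord_max.

Definition binl m : bmap m m.+1 := bmap_of (fun i => bvar (lift ord_max i)).

Definition binr m : bmap 1 m.+1 := bmap_of (fun _ => bnew m).

Definition bcopair m k (u : bmap m k) (v : bmap 1 k) : bmap m.+1 k :=
  bmap_of (fun i => if unlift ord_max i is Some j then u (bvar j) else v (bvar ord0)).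

Lemma binlE m i : binl m (bvar i) = bvar (lift ord_max i).
Proof. exact: bmap_ofE. Qed.

Lemma binrE m i : binr m (bvar i) = bnew m.
Proof. exact: bmap_ofE. Qed.

Lemma bcopairKl m k (u : bmap m k) v : bcomp (bcopair u v) (binl m) = u.
Proof. by apply: bmap_var_eq => i; rewrite bcompE binlE bmap_ofE liftK. Qed.

Lemma bcopairKr m k (u : bmap m k) v : bcomp (bcopair u v) (binr m) = v.
Proof.
by apply: bmap_var_eq => i; rewrite bcompE binrE bmap_ofE unlift_none ord1.
Qed.

Lemma bcopair_eta m k (h : bmap m.+1 k) :
  bcopair (bcomp h (binl m)) (bcomp h (binr m)) = h.
Proof.
apply: bmap_var_eq => i; rewrite bmap_ofE.
by case: unliftP => [j|] ->; rewrite bcompE ?binlE ?binrE.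
Qed.

Lemma bcomp_copair m k l (h : bmap k l) (u : bmap m k) v :
  bcomp h (bcopair u v) = bcopair (bcomp h u) (bcomp h v).
Proof. by rewrite -[LHS]bcopair_eta -!bcompA bcopairKl bcopairKr. Qed.

Lemma bcopair_inl_inr m : bcopair (binl m) (binr m) = bid m.+1.
Proof. by rewrite -[RHS]bcopair_eta !bcomp_idl. Qed.

Lemma path_of_bmap_nat n m (g : bmap n m.+1) k l (f : bmap k l)
  (x : pobj (pprod (yon m) Int) k) :
  bcomp (bcopair (bcomp f x.1) (bcomp f x.2)) g = bcomp f (bcomp (bcopair x.1 x.2) g).
Proof. by rewrite -bcomp_copair bcompA. Qed.

Definition path_of_bmap n m (g : bmap n m.+1) : pobj (pexp (yon n)) m :=
  @Hom (pprod (yon m) Int) (yon n) (fun k x => bcomp (bcopair x.1 x.2) g)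
    (path_of_bmap_nat g).

Definition bmap_of_path n m (p : pobj (pexp (yon n)) m) : bmap n m.+1 :=
  hfun p m.+1 (binl m, binr m).

Lemma path_of_bmapK n m : cancel (@path_of_bmap n m) (@bmap_of_path n m).
Proof. by move=> g; rewrite /bmap_of_path /= bcopair_inl_inr bcomp_idl. Qed.

Lemma bmap_of_pathK n m : cancel (@bmap_of_path n m) (@path_of_bmap n m).
Proof.
move=> p; apply: hom_eq => k [u v] /=.
have := hnat p (bcopair u v) (binl m, binr m).
by rewrite /= bcopairKl bcopairKr => ->.
Qed.

Definition bext m m' (f : bmap m m') : bmap m.+1 m'.+1 :=
  bcopair (bcomp (binl m') f) (binr m').

Lemma bmap_of_path_act n m m' (f : bmap m m') (p : pobj (pexp (yon n)) m) :
  bmap_of_path (pact (pexp (yon n)) f p) = bcomp (bext f) (bmap_of_path p).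
Proof.
have := hnat p (bext f) (binl m, binr m).
by rewrite /= bcopairKl bcopairKr => ->.
Qed.

Lemma bext_binl m m' (f : bmap m m') p : bext f (binl m p) = binl m' (f p).
Proof. by rewrite -bcompE bcopairKl bcompE. Qed.

Lemma bext_bnew m m' (f : bmap m m') : bext f (bnew m) = bnew m'.
Proof. by rewrite -(binrE m ord0) -bcompE bcopairKr binrE. Qed.

Definition bdown m : bmap m.+1 m := bcopair (bid m) (bmap_of (fun _ => ord_max)).

Lemma bdown_binl m p : bdown m (binl m p) = p.
Proof. by rewrite -bcompE bcopairKl bidE. Qed.

Lemma val_bnew m : val (bnew m) = m.+1.
Proof. by rewrite /= /bump ltnn. Qed.

Lemma binl_neq_bnew m p : binl m p != bnew m.
Proof.
case: (bpointP p) => [||i]; rewrite ?bmap_bot ?bmap_top ?binlE.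
- by rewrite -(inj_eq val_inj) val_bnew.
- by rewrite -(inj_eq val_inj) val_bnew /= eqn_leq ltnn.
- by rewrite /bnew (inj_eq (@bvar_inj _)) eq_sym neq_lift.
Qed.

Lemma binl_bdown m p : p != bnew m -> binl m (bdown m p) = p.
Proof.
case: (bpointP p) => [||i]; rewrite ?bmap_bot ?bmap_top // => ne_new.
case: (unliftP ord_max i) ne_new => [j ->|->]; last by rewrite eqxx.
by rewrite -binlE bdown_binl.
Qed.

Section Factorization.
Variables n m : nat.
Implicit Types (g : bmap n m.+1) (T : {set 'I_n}).

Definition bsupp g : {set 'I_n} := [set i | g (bvar i) != bnew m].

Definition bres_on T g : bmap #|T| m :=
  bmap_of (fun j => bdown m (g (bvar (enum_val j)))).

Definition bfactor g : {T : {set 'I_n} & bmap #|T| m} :=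
  existT _ (bsupp g) (bres_on (bsupp g) g).

End Factorization.

(* [index i (enum S)] is [#|S|] exactly when [i \notin S], so the variables
   outside S go to the new point. *)
Definition bgen n (S : {set 'I_n}) : bmap n #|S|.+1 :=
  bmap_of (fun i => bvar (inord (index i (enum S)))).

Lemma bgen_enum_val n (S : {set 'I_n}) (j : 'I_#|S|) :
  bgen S (bvar (enum_val j)) = binl _ (bvar j).
Proof.
rewrite bmap_ofE binlE; congr bvar; apply: ord_inj.
rewrite lift_max (enum_val_nth (enum_val j)) index_uniq ?enum_uniq -?cardE //.
by rewrite inordK // ltnS ltnW.
Qed.

Lemma bgen_notin n (S : {set 'I_n}) i : i \notin S -> bgen S (bvar i) = bnew _.
Proof.
move=> iS; rewrite bmap_ofE; congr bvar; apply: ord_inj.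
by rewrite /= memNindex ?mem_enum // -cardE inordK.
Qed.

Lemma bsupp_bgen n (S : {set 'I_n}) : bsupp (bgen S) = S.
Proof.
apply/setP => i; rewrite inE; case: (boolP (i \in S)) => [iS|/bgen_notin->].
  by rewrite -(enum_rankK_in iS iS) bgen_enum_val binl_neq_bnew.
by rewrite eqxx.
Qed.

Lemma bfactor_bgen n (S : {set 'I_n}) : bfactor (bgen S) = existT _ S (bid #|S|).
Proof.
rewrite /bfactor bsupp_bgen; congr existT; apply: bmap_var_eq => j.
by rewrite bmap_ofE bgen_enum_val bdown_binl bidE.
Qed.

Lemma bsupp_bext n m m' (f : bmap m m') (g : bmap n m.+1) :
  bsupp (bcomp (bext f) g) = bsupp g.
Proof.
apply/setP => i; rewrite !inE bcompE.
have [->|ne_new] := eqVneq (g (bvar i)) (bnew m); first by rewrite bext_bnew eqxx.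
by rewrite -(binl_bdown ne_new) bext_binl !binl_neq_bnew.
Qed.

Lemma bfactor_bext n m m' (f : bmap m m') (g : bmap n m.+1) :
  bfactor (bcomp (bext f) g) = existT _ (bsupp g) (bcomp f (bres_on (bsupp g) g)).
Proof.
rewrite /bfactor bsupp_bext; congr existT; apply: bmap_var_eq => j.
have : enum_val j \in bsupp g := enum_valP j.
rewrite inE => /binl_bdown ne_new.
by rewrite bcompE !bmap_ofE bcompE -ne_new bext_binl !bdown_binl.
Qed.

Lemma bext_bfactor n m (g : bmap n m.+1) :
  bcomp (bext (bres_on (bsupp g) g)) (bgen (bsupp g)) = g.
Proof.
apply: bmap_var_eq => i; rewrite bcompE.
case: (boolP (i \in bsupp g)) => [iS|iNS].
  rewrite -(enum_rankK_in iS iS) bgen_enum_val bext_binl bmap_ofE enum_rankK_in //.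
  by move: iS; rewrite inE => /binl_bdown.
by rewrite bgen_notin // bext_bnew; move: iNS; rewrite inE negbK => /eqP.
Qed.

Section PathFamilies.
Variables (n : nat) (X : cset).

Definition generic_values (a : hom (pexp (yon n)) X) (S : {set 'I_n}) : pobj X #|S| :=
  hfun a #|S| (path_of_bmap (bgen S)).

Definition glue (c : forall S : {set 'I_n}, pobj X #|S|) m (g : bmap n m.+1) : pobj X m :=
  pact X (tagged (bfactor g)) (c (tag (bfactor g))).

Lemma glue_bext c m m' (f : bmap m m') (g : bmap n m.+1) :
  glue c (bcomp (bext f) g) = pact X f (glue c g).
Proof. by rewrite /glue bfactor_bext /= (csetP X).2. Qed.

Lemma glue_hom_nat c m m' (f : bmap m m') (p : pobj (pexp (yon n)) m) :
  glue c (bmap_of_path (pact (pexp (yon n)) f p)) = pact X f (glue c (bmap_of_path p)).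
Proof. by rewrite bmap_of_path_act glue_bext. Qed.

Definition glue_hom c : hom (pexp (yon n)) X :=
  @Hom (pexp (yon n)) X (fun m p => glue c (bmap_of_path p)) (glue_hom_nat c).

Lemma generic_values_bij : bijective generic_values.
Proof.
exists glue_hom => [a|c].
- apply: hom_eq => m p /=.
  rewrite /glue /= -(hnat a); congr (hfun a m _).
  apply: (can_inj (@bmap_of_pathK n m)).
  by rewrite bmap_of_path_act path_of_bmapK bext_bfactor.
- apply: functional_extensionality_dep => S.
  by rewrite /generic_values /= bcopair_inl_inr bcomp_idl /glue bfactor_bgen (csetP X).1.
Qed.

End PathFamilies.

Section SubsetCodes.
Variable n : nat.

Definition ksets (k : nat) : {set {set 'I_n}} := [set A : {set 'I_n} | #|A| == k].

Lemma card_ksets k : #|ksets k| = 'C(n, k).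
Proof. by rewrite card_draws card_ord. Qed.

Definition ksubset (k : 'I_n.+1) (j : 'I_('C(n, k))) : {set 'I_n} :=
  enum_val (cast_ord (esym (card_ksets k)) j).
Arguments ksubset : clear implicits.

Lemma card_ksubset k j : #|ksubset k j| = k.
Proof. by have := enum_valP (cast_ord (esym (card_ksets k)) j); rewrite inE => /eqP. Qed.

Lemma card_set_ltn (S : {set 'I_n}) : #|S| < n.+1.
Proof. by rewrite ltnS -[leqRHS](card_ord n) max_card. Qed.

Lemma mem_ksets (S : {set 'I_n}) : S \in ksets #|S|.
Proof. by rewrite inE. Qed.

Definition subset_code (S : {set 'I_n}) : {k : 'I_n.+1 & 'I_('C(n, k))} :=
  existT _ (Ordinal (card_set_ltn S))
    (cast_ord (card_ksets #|S|) (enum_rank_in (mem_ksets S) S)).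

Definition code_subset (w : {k : 'I_n.+1 & 'I_('C(n, k))}) : {set 'I_n} :=
  ksubset (tag w) (tagged w).

Lemma subset_codeK : cancel subset_code code_subset.
Proof.
by move=> S; rewrite /code_subset /ksubset /= cast_ordK enum_rankK_in ?mem_ksets.
Qed.

Lemma code_subset_inj : injective code_subset.
Proof.
move=> [k j] [k' j']; rewrite /code_subset /= => E.
have ek : k = k' by apply: val_inj; rewrite /= -(card_ksubset j) E card_ksubset.
subst k'; congr existT.
exact: cast_ord_inj (enum_val_inj E).
Qed.

Lemma subset_code_bij : bijective subset_code.
Proof. exact: Bijective subset_codeK (inj_can_sym subset_codeK code_subset_inj). Qed.

End SubsetCodes.

Theorem corollary2p7 (X XI : cset) (adj : right_adjoint_value X XI) (n : nat) :
  exists f : pobj XI n -> (forall k : 'I_n.+1, 'I_('C(n, k)) -> pobj X k),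
    bijective f.
Proof.
case: adj => phi [phi_bij _].
have [psi phiK psiK] := phi_bij (yon_cs n).
have [uncode codeK uncodeK] :=
  reindex_bij (fun w : {k : 'I_n.+1 & 'I_('C(n, k))} => pobj X (tag w))
    (@subset_code_bij n).
exists ((fun d k j => d (existT _ k j)) \o uncode \o @generic_values n X \o psi
        \o @yoneda_hom XI n).
apply: bij_comp (yoneda_hom_bij _ _).
apply: bij_comp (Bijective psiK phiK).
apply: bij_comp (generic_values_bij _ _).
apply: bij_comp (Bijective uncodeK codeK).
exact: (@curry_bij _ (fun k : 'I_n.+1 => 'I_('C(n, k))) (pobj X)).
Qed.
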